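(* Let $L$ be a frame. The category $L$-$\mathbf{LSCSob}$, whose objects are the locally super-compact $L$-sober spaces and whose morphisms are the continuous maps, is isomorphic to the category $L$-$\mathbf{CDom}$, whose objects are the continuous $L$-dcpo's and whose morphisms are the Scott continuous maps.
   Context: $L$ is a frame (complete Heyting algebra) with implication $\to$ ($a\wedge c\le b \iff c\le a\to b$). An $L$-subset of a set $X$ is a map $X\to L$; $L^X$ is the set of these; $A$ is nonempty if $\bigvee_{x}A(x)=1$; $a_X$ is the constant $L$-subset with value $a\in L$. Put ${\rm sub}_X(A,B)=\bigwedge_{x\in X}A(x)\to B(x)$. For a map $f:X\to Y$, $f^\rightarrow(A)(y)=\bigvee_{f(x)=y}A(x)$ and $f^\leftarrow(B)=B\circ f$. An ($L$-)topology on $X$ is $\mathcal O(X)\subseteq L^X$ closed under finite meets and arbitrary joins and containing every constant $a_X$; its members are open; $(X,\mathcal O(X))$ is an $L$-topological space. Interior: $A^\circ=\bigvee\{B\in\mathcal O(X): B\le A\}$. A map $f$ is continuous if $f^\leftarrow(B)$ is open for all open $B$. An $L$-order on $P$ is $e:P\times P\to L$ with $e(x,x)=1$, $e(x,y)\wedge e(y,z)\le e(x,z)$, and $e(x,y)\wedge e(y,x)=1\Rightarrow x=y$. Put ${\downarrow}y(x)=e(x,y)$, ${\uparrow}y(x)=e(y,x)$. $A\in L^P$ is an upper (lower) set if $A(x)\wedge e(x,y)\le A(y)$ (resp. $A(x)\wedge e(y,x)\le A(y)$). $x=\sqcup A$ (supremum) if $e(x,y)={\rm sub}_P(A,{\downarrow}y)$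 for all $y$. $D\in L^P$ is directed if nonempty and $D(x)\wedge D(y)\le\bigvee_z D(z)\wedge e(x,z)\wedge e(y,z)$; an ideal is a directed lower set. $P$ is an $L$-dcpo if every directed $L$-subset has a supremum. $f:P\to Q$ is Scott continuous if for every directed $D$ with a supremum, $f^\rightarrow(D)$ has a supremum and $f(\sqcup D)=\sqcup f^\rightarrow(D)$. Define ${\Downarrow}x(y)=\bigwedge\{e(x,\sqcup I)\to I(y): I \text{ an ideal of } P \text{ having a supremum}\}$; $P$ is continuous if each ${\Downarrow}x$ is directed with $\sqcup{\Downarrow}x=x$; a continuous $L$-dcpo is a continuous $L$-ordered set that is an $L$-dcpo. Super-compact: $A\in L^X$ nonempty with ${\rm sub}_X(A,\bigvee_i V_i)=\bigvee_i{\rm sub}_X(A,V_i)$ for every family of open sets $V_i$; ${\rm SC}(X)$ is the set of these. $X$ is locally super-compact if every open $A$ satisfies $A=\bigvee_{B\in{\rm SC}(X)}{\rm sub}_X(B,A)\wedge B^\circ$. A point of $\mathcal O(X)$ is $p:\mathcal O(X)\to L$ with $p(A\wedge B)=p(A)\wedge p(B)$, $p(\bigvee_iA_i)=\bigvee_ip(A_i)$ and $p(\lambda_X)=\lambda$ for all $\lambda\in L$. For $x\in X$, $[x](A)=A(x)$ is a point. $X$ is $L$-sober if $x\mapsto[x]$ is a bijection from $X$ onto the set of points of $\mathcal O(X)$. *)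

From Stdlib Require Import JMeq.




Record frame := Frame {
  fcar :> Type;
  fle : fcar -> fcar -> Prop;
  fle_refl : forall a, fle a a;
  fle_trans : forall a b c, fle a b -> fle b c -> fle a c;
  fle_anti : forall a b, fle a b -> fle b a -> a = b;
  fsup : (fcar -> Prop) -> fcar;
  fsup_ub : forall (S : fcar -> Prop) a, S a -> fle a (fsup S);
  fsup_least : forall (S : fcar -> Prop) b,
      (forall a, S a -> fle a b) -> fle (fsup S) b;
  fmeet : fcar -> fcar -> fcar;
  fmeet_l : forall a b, fle (fmeet a b) a;
  fmeet_r : forall a b, fle (fmeet a b) b;
  fmeet_glb : forall a b c, fle c a -> fle c b -> fle c (fmeet a b);
  fimp : fcar -> fcar -> fcar;
  fimp_adj : forall a b c, fle (fmeet a c) b <-> fle c (fimp a b)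
}.

Arguments fle {f}.
Arguments fsup {f}.
Arguments fmeet {f}.
Arguments fimp {f}.

Definition bigjoin {L : frame} {I : Type} (F : I -> L) : L :=
  fsup (fun a => exists i, a = F i).
Definition bigmeet {L : frame} {I : Type} (F : I -> L) : L :=
  fsup (fun a => forall i, fle a (F i)).
Definition finf {L : frame} (S : L -> Prop) : L :=
  fsup (fun a => forall b, S b -> fle a b).
Definition ftop {L : frame} : L := fsup (fun _ => True).

Definition cst {L : frame} (X : Type) (a : L) : X -> L := fun _ => a.

Definition subX {L : frame} {X : Type} (A B : X -> L) : L :=
  bigmeet (fun x => fimp (A x) (B x)).

Definition nonemptyL {L : frame} {X : Type} (A : X -> L) : Prop :=
  bigjoin A = ftop.

Definition leL {L : frame} {X : Type} (A B : X -> L) : Prop :=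
  forall x, fle (A x) (B x).

Definition fimage {L : frame} {X Y : Type} (f : X -> Y) (A : X -> L) : Y -> L :=
  fun y => fsup (fun a => exists x, f x = y /\ a = A x).

Definition is_topology {L : frame} {X : Type} (O : (X -> L) -> Prop) : Prop :=
  (forall A B, O A -> O B -> O (fun x => fmeet (A x) (B x))) /\
  (forall (I : Type) (V : I -> X -> L), (forall i, O (V i)) ->
       O (fun x => bigjoin (fun i => V i x))) /\
  (forall a : L, O (cst X a)).

Definition interior {L : frame} {X : Type} (O : (X -> L) -> Prop) (A : X -> L)
  : X -> L :=
  fun x => fsup (fun a => exists B, O B /\ leL B A /\ a = B x).

Definition Lcontinuous {L : frame} {X Y : Type}
  (OX : (X -> L) -> Prop) (OY : (Y -> L) -> Prop) (f : X -> Y) : Prop :=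
  forall B, OY B -> OX (fun x => B (f x)).

Definition super_compact {L : frame} {X : Type} (O : (X -> L) -> Prop)
  (A : X -> L) : Prop :=
  nonemptyL A /\
  forall (I : Type) (V : I -> X -> L), (forall i, O (V i)) ->
    subX A (fun x => bigjoin (fun i => V i x)) = bigjoin (fun i => subX A (V i)).

Definition locally_super_compact {L : frame} {X : Type}
  (O : (X -> L) -> Prop) : Prop :=
  forall A, O A ->
    A = (fun x => fsup (fun a => exists B, super_compact O B /\
                                   a = fmeet (subX B A) (interior O B x))).

(* points of O(X): maps O(X) -> L, represented as functions (X -> L) -> L
   whose values off O(X) are irrelevant (two points are equal iff they
   agree on all open sets). *)
Definition is_point {L : frame} {X : Type} (O : (X -> L) -> Prop)
  (p : (X -> L) -> L) : Prop :=
  (forall A B, O A -> O B -> p (fun x => fmeet (A x) (B x)) = fmeet (p A) (p B)) /\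
  (forall (I : Type) (V : I -> X -> L), (forall i, O (V i)) ->
     p (fun x => bigjoin (fun i => V i x)) = bigjoin (fun i => p (V i))) /\
  (forall a : L, p (cst X a) = a).

(* x |-> [x] is a bijection from X onto the points of O(X) *)
Definition L_sober {L : frame} {X : Type} (O : (X -> L) -> Prop) : Prop :=
  (forall x y : X, (forall A, O A -> A x = A y) -> x = y) /\
  (forall p, is_point O p -> exists x : X, forall A, O A -> p A = A x).

Definition is_Lorder {L : frame} {P : Type} (e : P -> P -> L) : Prop :=
  (forall x, e x x = ftop) /\
  (forall x y z, fle (fmeet (e x y) (e y z)) (e x z)) /\
  (forall x y, fmeet (e x y) (e y x) = ftop -> x = y).

Definition down {L : frame} {P : Type} (e : P -> P -> L) (y : P) : P -> L :=
  fun x => e x y.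

Definition lower_set {L : frame} {P : Type} (e : P -> P -> L) (A : P -> L) : Prop :=
  forall x y, fle (fmeet (A x) (e y x)) (A y).

Definition is_sup {L : frame} {P : Type} (e : P -> P -> L) (A : P -> L) (x : P)
  : Prop := forall y, e x y = subX A (down e y).

Definition directed {L : frame} {P : Type} (e : P -> P -> L) (D : P -> L) : Prop :=
  nonemptyL D /\
  forall x y, fle (fmeet (D x) (D y))
                  (bigjoin (fun z => fmeet (D z) (fmeet (e x z) (e y z)))).

Definition ideal {L : frame} {P : Type} (e : P -> P -> L) (I : P -> L) : Prop :=
  directed e I /\ lower_set e I.

Definition L_dcpo {L : frame} {P : Type} (e : P -> P -> L) : Prop :=
  forall D, directed e D -> exists x, is_sup e D x.

Definition Scott_continuous {L : frame} {P Q : Type}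
  (eP : P -> P -> L) (eQ : Q -> Q -> L) (f : P -> Q) : Prop :=
  forall D, directed eP D -> forall x, is_sup eP D x ->
    is_sup eQ (fimage f D) (f x).

Definition wayb {L : frame} {P : Type} (e : P -> P -> L) (x : P) : P -> L :=
  fun y => finf (fun b => exists (I : P -> L) (s : P),
                   ideal e I /\ is_sup e I s /\ b = fimp (e x s) (I y)).

Definition continuous_Lordered {L : frame} {P : Type} (e : P -> P -> L) : Prop :=
  forall x, directed e (wayb e x) /\ is_sup e (wayb e x) x.

Record LSCSob (L : frame) := MkLSCSob {
  sob_car : Type;
  sob_O : (sob_car -> L) -> Prop;
  sob_top : is_topology sob_O;
  sob_lsc : locally_super_compact sob_O;
  sob_sober : L_sober sob_O
}.
Arguments sob_car {L}.
Arguments sob_O {L}.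

Record LSCSob_hom {L : frame} (A B : LSCSob L) := MkLSCSobHom {
  sob_fun : sob_car A -> sob_car B;
  sob_fun_cont : Lcontinuous (sob_O A) (sob_O B) sob_fun
}.
Arguments sob_fun {L A B}.

Record CDom (L : frame) := MkCDom {
  cd_car : Type;
  cd_e : cd_car -> cd_car -> L;
  cd_ord : is_Lorder cd_e;
  cd_dcpo : L_dcpo cd_e;
  cd_cont : continuous_Lordered cd_e
}.
Arguments cd_car {L}.
Arguments cd_e {L}.

Record CDom_hom {L : frame} (A B : CDom L) := MkCDomHom {
  cd_fun : cd_car A -> cd_car B;
  cd_fun_scott : Scott_continuous (cd_e A) (cd_e B) cd_fun
}.
Arguments cd_fun {L A B}.

(* In both categories identities are
   the identity maps and composition is composition of maps; morphisms are
   determined by their underlying maps.  A functor is given by an object map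
   and a morphism map preserving identities and composition; the categories
   are isomorphic if there are functors F, G with G o F = Id and F o G = Id
   (on objects strictly, on morphisms up to the induced identification of
   hom-types, expressed with JMeq). *)

Definition functor_LS_CD {L : frame} (F0 : LSCSob L -> CDom L)
  (F1 : forall A B, LSCSob_hom A B -> CDom_hom (F0 A) (F0 B)) : Prop :=
  (forall A (h : LSCSob_hom A A), (forall x, sob_fun h x = x) ->
     forall y, cd_fun (F1 A A h) y = y) /\
  (forall A B C (f : LSCSob_hom A B) (g : LSCSob_hom B C) (h : LSCSob_hom A C),
     (forall x, sob_fun h x = sob_fun g (sob_fun f x)) ->
     forall y, cd_fun (F1 A C h) y = cd_fun (F1 B C g) (cd_fun (F1 A B f) y)).

Definition functor_CD_LS {L : frame} (G0 : CDom L -> LSCSob L)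
  (G1 : forall A B, CDom_hom A B -> LSCSob_hom (G0 A) (G0 B)) : Prop :=
  (forall A (h : CDom_hom A A), (forall x, cd_fun h x = x) ->
     forall y, sob_fun (G1 A A h) y = y) /\
  (forall A B C (f : CDom_hom A B) (g : CDom_hom B C) (h : CDom_hom A C),
     (forall x, cd_fun h x = cd_fun g (cd_fun f x)) ->
     forall y, sob_fun (G1 A C h) y = sob_fun (G1 B C g) (sob_fun (G1 A B f) y)).

Definition categories_isomorphic (L : frame) : Prop :=
  exists (F0 : LSCSob L -> CDom L)
         (F1 : forall A B, LSCSob_hom A B -> CDom_hom (F0 A) (F0 B))
         (G0 : CDom L -> LSCSob L)
         (G1 : forall A B, CDom_hom A B -> LSCSob_hom (G0 A) (G0 B)),
    functor_LS_CD F0 F1 /\ functor_CD_LS G0 G1 /\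
    (forall A, G0 (F0 A) = A) /\
    (forall B, F0 (G0 B) = B) /\
    (forall A B (f : LSCSob_hom A B), JMeq (G1 _ _ (F1 A B f)) f) /\
    (forall A B (g : CDom_hom A B), JMeq (F1 _ _ (G1 A B g)) g).

(* A sober L-space goes to its points ordered by specialization [x ≤ y = /\_U U x -> U y];
   a continuous L-dcpo goes to itself with the L-topology of those U such that
   [U x = \/_y ⇓x(y) /\ U y].  Sobriety turns a directed L-subset D into the point
   [U |-> \/_z D z /\ U z], which provides its supremum, and a super-compact B into a point
   x_B with [sub(B, U) = U x_B].  Local super-compactness then gives
   [⇓x(y) = \/_B B°(x) /\ (y ≤ x_B)]: an ideal with supremum x, and open as a function of x.
   Conversely, principal upper sets are super-compact, the sets [⇓-(z)] are open by
   interpolation, and a point p sits at the supremum of the directed set [z |-> p(⇑z)].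
   The two constructions are mutually inverse, continuous maps are exactly the Scott
   continuous ones, and both functors are the identity on underlying maps. *)

From Stdlib Require Import JMeq FunctionalExtensionality PropExtensionality ProofIrrelevance.

Local Notation "a ⊑ b" := (fle a b) (at level 70).

Section FrameReasoning.
Context {L : frame}.
Implicit Types t a b c d : L.

Lemma le_trans {a b c} : a ⊑ b -> b ⊑ c -> a ⊑ c.
Proof. apply fle_trans. Qed.

Lemma le_by_lower {a b} : (forall t, t ⊑ a -> t ⊑ b) -> a ⊑ b.
Proof. intro H; apply H, fle_refl. Qed.

Lemma eq_by_lower {a b} :
  (forall t, t ⊑ a -> t ⊑ b) -> (forall t, t ⊑ b -> t ⊑ a) -> a = b.
Proof. intros H1 H2; apply fle_anti; apply le_by_lower; assumption. Qed.

Lemma le_meet {t a b} : t ⊑ fmeet a b <-> t ⊑ a /\ t ⊑ b.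
Proof.
  split.
  - intro H; split; (eapply le_trans; [exact H|]); [apply fmeet_l | apply fmeet_r].
  - intros [Ha Hb]; apply fmeet_glb; assumption.
Qed.

Lemma le_top t : t ⊑ ftop.
Proof. apply fsup_ub; exact I. Qed.

Lemma top_le {a} : ftop ⊑ a -> a = ftop.
Proof. intro H; apply fle_anti; [apply le_top | exact H]. Qed.

Lemma le_sup {t} {S : L -> Prop} s : S s -> t ⊑ s -> t ⊑ fsup S.
Proof. intros Hs H; exact (le_trans H (fsup_ub _ S s Hs)). Qed.

(* Infinite distributivity [t /\ \/S = \/(t /\ s)], which holds because
   [fmeet t] has the right adjoint [fimp t]. *)
Lemma le_sup_elim {t d} {S : L -> Prop} : t ⊑ fsup S ->
  (forall s, S s -> forall t', t' ⊑ t -> t' ⊑ s -> t' ⊑ d) -> t ⊑ d.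
Proof.
  intros H K.
  assert (Hd : fmeet t (fsup S) ⊑ d).
  { apply fimp_adj, fsup_least; intros s Hs; apply fimp_adj.
    apply (K s Hs); [apply fmeet_l | apply fmeet_r]. }
  apply (le_trans (b := fmeet t (fsup S))); [apply le_meet; split|]; auto using fle_refl.
Qed.

Lemma le_join {I : Type} {t} {F : I -> L} i : t ⊑ F i -> t ⊑ bigjoin F.
Proof. apply le_sup; exists i; reflexivity. Qed.

Lemma le_join_elim {I : Type} {t d} {F : I -> L} : t ⊑ bigjoin F ->
  (forall i t', t' ⊑ t -> t' ⊑ F i -> t' ⊑ d) -> t ⊑ d.
Proof. intros H K; apply (le_sup_elim H); intros s [i ->]; apply K. Qed.

Lemma le_bigmeet {I : Type} {t} {F : I -> L} : t ⊑ bigmeet F <-> forall i, t ⊑ F i.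
Proof.
  split.
  - intros H i; apply (le_trans H), fsup_least; intros a Ha; apply Ha.
  - intro H; apply fsup_ub; exact H.
Qed.

Lemma le_finf {t} {S : L -> Prop} : t ⊑ finf S <-> forall b, S b -> t ⊑ b.
Proof.
  split.
  - intros H b Hb; apply (le_trans H), fsup_least; intros a Ha; apply Ha, Hb.
  - intro H; apply fsup_ub; exact H.
Qed.

Lemma le_imp {t a b} : (forall t', t' ⊑ t -> t' ⊑ a -> t' ⊑ b) -> t ⊑ fimp a b.
Proof. intro H; apply fimp_adj, H; [apply fmeet_r | apply fmeet_l]. Qed.

Lemma le_imp_elim {t a b} : t ⊑ fimp a b -> t ⊑ a -> t ⊑ b.
Proof.
  intros H Ha; apply (le_trans (b := fmeet a (fimp a b))).
  - apply le_meet; split; assumption.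
  - apply fimp_adj, fle_refl.
Qed.

Lemma le_subX {X : Type} {t} {A B : X -> L} :
  (forall x t', t' ⊑ t -> t' ⊑ A x -> t' ⊑ B x) -> t ⊑ subX A B.
Proof. intro H; apply le_bigmeet; intro x; apply le_imp, H. Qed.

Lemma le_subX_elim {X : Type} {t} {A B : X -> L} x :
  t ⊑ subX A B -> t ⊑ A x -> t ⊑ B x.
Proof. intro H; apply le_imp_elim, (proj1 le_bigmeet H x). Qed.

Lemma le_fimage {X Y : Type} {f : X -> Y} {D : X -> L} {t} x :
  t ⊑ D x -> t ⊑ fimage f D (f x).
Proof. apply le_sup; exists x; split; reflexivity. Qed.

Lemma le_nonempty {X : Type} {A : X -> L} t : nonemptyL A -> t ⊑ bigjoin A.
Proof. intro H; rewrite H; apply le_top. Qed.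

Lemma fsup_image {I : Type} (Q : I -> Prop) (F : I -> L) :
  fsup (fun a => exists i, Q i /\ a = F i) = bigjoin (fun s : {i | Q i} => F (proj1_sig s)).
Proof.
  apply eq_by_lower; intros t Ht.
  - apply (le_sup_elim Ht); intros s [i [Hi ->]] t' _ H; exact (le_join (exist _ i Hi) H).
  - apply (le_join_elim Ht); intros [i Hi] t' _ H.
    exact (le_sup _ (ex_intro _ i (conj Hi eq_refl)) H).
Qed.

End FrameReasoning.

(* [restrict Ht] with [Ht : t' ⊑ t] replaces every hypothesis [t ⊑ a] by [t' ⊑ a]. *)
Ltac restrict Ht :=
  match type of Ht with @fle ?L ?t' ?t =>
    repeat match goal with
    | K : @fle L t ?a |- _ => apply (le_trans Ht) in K
    end end; clear Ht.

Tactic Notation "case_join" hyp(H) "as" ident(i) simple_intropattern(Hi) :=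
  let t := fresh "t" in let Ht := fresh "Ht" in
  apply (le_join_elim H); clear H; intros i t Ht Hi; restrict Ht.

Tactic Notation "case_sup" hyp(H) "as" simple_intropattern(p) simple_intropattern(Hs) :=
  let s := fresh "s" in let t := fresh "t" in let Ht := fresh "Ht" in
  apply (le_sup_elim H); clear H; intros s p t Ht Hs; restrict Ht.

Section LOrder.
Context {L : frame} {P : Type} {e : P -> P -> L}.
Hypothesis He : is_Lorder e.
Implicit Types (t : L) (x y z s : P) (D : P -> L).

Lemma ord_refl t x : t ⊑ e x x.
Proof. rewrite (proj1 He); apply le_top. Qed.

Lemma ord_trans {t} x y z : t ⊑ e x y -> t ⊑ e y z -> t ⊑ e x z.
Proof.
  intros Hxy Hyz; eapply le_trans; [|apply (proj1 (proj2 He))].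
  apply le_meet; split; eassumption.
Qed.

Lemma ord_antisym x y : ftop ⊑ e x y -> ftop ⊑ e y x -> x = y.
Proof. intros Hxy Hyx; apply (proj2 (proj2 He)), top_le, le_meet; split; assumption. Qed.

Lemma is_sup_elim {D s t} y z : is_sup e D s -> t ⊑ e s y -> t ⊑ D z -> t ⊑ e z y.
Proof. intros Hs H; rewrite Hs in H; exact (le_subX_elim z H). Qed.

Lemma is_sup_ub {D s t} z : is_sup e D s -> t ⊑ D z -> t ⊑ e z s.
Proof. intro Hs; apply (is_sup_elim s z Hs), ord_refl. Qed.

Lemma is_sup_least {D s t} y : is_sup e D s ->
  (forall z t', t' ⊑ t -> t' ⊑ D z -> t' ⊑ e z y) -> t ⊑ e s y.
Proof. intros Hs H; rewrite Hs; apply le_subX, H. Qed.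

Lemma is_sup_unique {D s s'} : is_sup e D s -> is_sup e D s' -> s = s'.
Proof.
  intros Hs Hs'; apply ord_antisym;
    [apply (is_sup_least _ Hs) | apply (is_sup_least _ Hs')];
    intros z t' _ Hz; eapply is_sup_ub; eassumption.
Qed.

Lemma down_ideal x : ideal e (down e x).
Proof.
  split; [split|].
  - apply top_le, (le_join x), ord_refl.
  - intros a b; apply le_by_lower; intros t Ht.
    apply (le_join x), le_meet; split; [apply ord_refl | exact Ht].
  - intros a b; apply le_by_lower; intros t [Ha Hba]%le_meet.
    exact (ord_trans _ _ _ Hba Ha).
Qed.

Lemma is_sup_down x : is_sup e (down e x) x.
Proof.
  intro y; apply eq_by_lower; intros t Ht.
  - apply le_subX; intros z t' Ht' Hz; exact (ord_trans _ _ _ Hz (le_trans Ht' Ht)).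
  - exact (le_subX_elim x Ht (ord_refl _ _)).
Qed.

Lemma lower_set_elim {A t} x y : lower_set e A -> t ⊑ A x -> t ⊑ e y x -> t ⊑ A y.
Proof. intros HA Hx Hyx; eapply le_trans; [|apply HA]; apply le_meet; split; eassumption. Qed.

Lemma le_wayb {t} x y : (forall I s t', ideal e I -> is_sup e I s ->
    t' ⊑ t -> t' ⊑ e x s -> t' ⊑ I y) -> t ⊑ wayb e x y.
Proof.
  intro H; apply le_finf; intros b [I [s [HI [Hs ->]]]]; apply le_imp; intros; eauto.
Qed.

Lemma wayb_elim {t x y} I s : t ⊑ wayb e x y -> ideal e I -> is_sup e I s ->
  t ⊑ e x s -> t ⊑ I y.
Proof.
  intros H HI Hs Hxs; apply (le_imp_elim (a := e x s)); [|exact Hxs].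
  apply (proj1 le_finf H); exists I, s; auto.
Qed.

Lemma wayb_le {t x y} : t ⊑ wayb e x y -> t ⊑ e y x.
Proof. intro H; exact (wayb_elim _ _ H (down_ideal x) (is_sup_down x) (ord_refl _ _)). Qed.

Lemma wayb_trans_r {t x y} x' : t ⊑ wayb e x y -> t ⊑ e x x' -> t ⊑ wayb e x' y.
Proof.
  intros H Hxx'; apply le_wayb; intros I s t' HI Hs Ht' Hx's.
  exact (wayb_elim I s (le_trans Ht' H) HI Hs (ord_trans _ _ _ (le_trans Ht' Hxx') Hx's)).
Qed.

Lemma wayb_trans_l {t x y} y' : t ⊑ wayb e x y -> t ⊑ e y' y -> t ⊑ wayb e x y'.
Proof.
  intros H Hy'y; apply le_wayb; intros I s t' HI Hs Ht' Hxs.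
  exact (lower_set_elim _ _ (proj2 HI) (wayb_elim I s (le_trans Ht' H) HI Hs Hxs)
           (le_trans Ht' Hy'y)).
Qed.

Definition lower_hull D : P -> L := fun y => bigjoin (fun z => fmeet (D z) (e y z)).

Lemma lower_hull_ideal D : directed e D -> ideal e (lower_hull D).
Proof.
  intros [Hne Hdir]; split; [split|].
  - apply top_le; apply (le_nonempty ftop) in Hne; case_join Hne as z Hz.
    apply (le_join z), (le_join z), le_meet; split; [exact Hz | apply ord_refl].
  - intros a b; apply le_by_lower; intros t [Ha Hb]%le_meet.
    case_join Ha as za [Dza Haza]%le_meet.
    case_join Hb as zb [Dzb Hbzb]%le_meet.
    assert (Hab := le_trans (proj2 le_meet (conj Dza Dzb)) (Hdir za zb)).
    case_join Hab as z [Dz [Hzaz Hzbz]%le_meet]%le_meet.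
    apply (le_join z), le_meet; split.
    + apply (le_join z), le_meet; split; [exact Dz | apply ord_refl].
    + apply le_meet; split; eapply ord_trans; eassumption.
  - intros x y; apply le_by_lower; intros t [Hx Hyx]%le_meet.
    case_join Hx as z [Dz Hxz]%le_meet.
    apply (le_join z), le_meet; split; [exact Dz | exact (ord_trans _ _ _ Hyx Hxz)].
Qed.

Lemma is_sup_lower_hull {D s} : is_sup e D s -> is_sup e (lower_hull D) s.
Proof.
  intros Hs y; apply eq_by_lower; intros t Ht.
  - apply le_subX; intros z t' Ht' Hz; case_join Hz as w [Dw Hzw]%le_meet.
    exact (ord_trans _ _ _ Hzw (is_sup_elim y w Hs (le_trans Ht' Ht) Dw)).
  - apply (is_sup_least _ Hs); intros z t' Ht' Dz; apply (le_subX_elim z (le_trans Ht' Ht)).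
    apply (le_join z), le_meet; split; [exact Dz | apply ord_refl].
Qed.

Lemma wayb_directed_sup {D s t x y} : directed e D -> is_sup e D s ->
  t ⊑ wayb e x y -> t ⊑ e x s -> t ⊑ lower_hull D y.
Proof.
  intros HD Hs H Hxs; exact (wayb_elim _ _ H (lower_hull_ideal D HD) (is_sup_lower_hull Hs) Hxs).
Qed.

End LOrder.

Lemma scott_continuous_monotone {L : frame} {P Q : Type} {eP : P -> P -> L}
  {eQ : Q -> Q -> L} (HP : is_Lorder eP) (HQ : is_Lorder eQ) {g : P -> Q} :
  Scott_continuous eP eQ g -> forall t x y, t ⊑ eP y x -> t ⊑ eQ (g y) (g x).
Proof.
  intros Hg t x y Hyx.
  apply (is_sup_ub HQ (g y) (Hg _ (proj1 (down_ideal HP x)) x (is_sup_down HP x))).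
  exact (le_fimage y Hyx).
Qed.

Lemma fimage_directed {L : frame} {P Q : Type} {eP : P -> P -> L} {eQ : Q -> Q -> L}
  {g : P -> Q} {D : P -> L} :
  (forall t x y, t ⊑ eP y x -> t ⊑ eQ (g y) (g x)) -> directed eP D -> directed eQ (fimage g D).
Proof.
  intros Hg [Hne Hdir]; split.
  - apply top_le; assert (HD := le_nonempty ftop Hne); case_join HD as x Dx.
    exact (le_join (g x) (le_fimage x Dx)).
  - intros a b; apply le_by_lower; intros t [Ha Hb]%le_meet.
    case_sup Ha as [xa [<- ->]] Dxa; case_sup Hb as [xb [<- ->]] Dxb.
    assert (Hab := le_trans (proj2 le_meet (conj Dxa Dxb)) (Hdir xa xb)).
    case_join Hab as x [Dx [Hxax Hxbx]%le_meet]%le_meet.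
    apply (le_join (g x)), le_meet; split; [exact (le_fimage x Dx)|].
    apply le_meet; split; apply Hg; assumption.
Qed.

Definition specialization {L : frame} {X : Type} (O : (X -> L) -> Prop) (x y : X) : L :=
  finf (fun b => exists U, O U /\ b = fimp (U x) (U y)).

Section Specialization.
Context {L : frame} {X : Type} {O : (X -> L) -> Prop}.
Implicit Types (t : L) (x y z : X) (U : X -> L).

Lemma le_specialization {t x y} :
  (forall U t', O U -> t' ⊑ t -> t' ⊑ U x -> t' ⊑ U y) -> t ⊑ specialization O x y.
Proof. intro H; apply le_finf; intros b [U [HU ->]]; apply le_imp; auto. Qed.

Lemma open_upper {U t x y} : O U -> t ⊑ U x -> t ⊑ specialization O x y -> t ⊑ U y.
Proof.
  intros HU Hx H; apply (le_imp_elim (a := U x)); [|exact Hx].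
  apply (proj1 le_finf H); exists U; auto.
Qed.

Lemma specialization_Lorder :
  (forall x y, (forall U, O U -> U x = U y) -> x = y) -> is_Lorder (specialization O).
Proof.
  intro HT0; split; [|split].
  - intro x; apply top_le, le_specialization; intros U t' _ _ Hx; exact Hx.
  - intros x y z; apply le_by_lower; intros t [Hxy Hyz]%le_meet.
    apply le_specialization; intros U t' HU Ht' Hx.
    exact (open_upper HU (open_upper HU Hx (le_trans Ht' Hxy)) (le_trans Ht' Hyz)).
  - intros x y H; apply HT0; intros U HU.
    assert (Hxy : ftop ⊑ fmeet (specialization O x y) (specialization O y x))
      by (rewrite H; apply fle_refl).
    apply le_meet in Hxy as [Hxy Hyx].
    apply eq_by_lower; intros t Ht;
      [exact (open_upper HU Ht (le_trans (le_top t) Hxy))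
      | exact (open_upper HU Ht (le_trans (le_top t) Hyx))].
Qed.

End Specialization.

(* The Scott topology of a continuous L-ordered set, in its way-below description. *)
Definition scott_open {L : frame} {P : Type} (e : P -> P -> L) (U : P -> L) : Prop :=
  forall x, U x = bigjoin (fun y => fmeet (wayb e x y) (U y)).

Definition way_above {L : frame} {P : Type} (e : P -> P -> L) (z : P) : P -> L :=
  fun x => wayb e x z.

Section ScottTopology.
Context {L : frame} {P : Type} {e : P -> P -> L}.
Hypothesis He : is_Lorder e.
Hypothesis Hc : continuous_Lordered e.
Implicit Types (t : L) (x y z : P) (U : P -> L).

Lemma le_join_wayb t x : t ⊑ bigjoin (wayb e x).
Proof. exact (le_nonempty t (proj1 (proj1 (Hc x)))). Qed.

Lemma wayb_directed_at {t x a b} : t ⊑ wayb e x a -> t ⊑ wayb e x b ->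
  t ⊑ bigjoin (fun z => fmeet (wayb e x z) (fmeet (e a z) (e b z))).
Proof.
  intros Ha Hb; eapply le_trans; [|apply (proj2 (proj1 (Hc x)))].
  apply le_meet; split; assumption.
Qed.

Lemma is_sup_wayb x : is_sup e (wayb e x) x.
Proof. exact (proj2 (Hc x)). Qed.

Definition wayb_wayb x z : L := bigjoin (fun y => fmeet (wayb e x y) (wayb e y z)).

Lemma wayb_wayb_ideal x : ideal e (wayb_wayb x).
Proof.
  split; [split|].
  - apply top_le; assert (Hx := le_join_wayb ftop x); case_join Hx as y Hxy.
    apply (le_join_elim (le_join_wayb _ y)); intros z t' Ht' Hyz; restrict Ht'.
    apply (le_join z), (le_join y), le_meet; split; assumption.
  - intros a b; apply le_by_lower; intros t [Ha Hb]%le_meet.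
    case_join Ha as ya [Hxya Hyaa]%le_meet.
    case_join Hb as yb [Hxyb Hybb]%le_meet.
    assert (Hab := wayb_directed_at Hxya Hxyb).
    case_join Hab as y [Hxy [Hyay Hyby]%le_meet]%le_meet.
    assert (Hab := wayb_directed_at (wayb_trans_r He y Hyaa Hyay) (wayb_trans_r He y Hybb Hyby)).
    case_join Hab as z [Hyz Habz]%le_meet.
    apply (le_join z), le_meet; split; [|exact Habz].
    apply (le_join y), le_meet; split; assumption.
  - intros z z'; apply le_by_lower; intros t [Hz Hz'z]%le_meet.
    case_join Hz as y [Hxy Hyz]%le_meet.
    apply (le_join y), le_meet; split; [exact Hxy | exact (wayb_trans_l z' Hyz Hz'z)].
Qed.

Lemma is_sup_wayb_wayb x : is_sup e (wayb_wayb x) x.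
Proof.
  intro y; apply eq_by_lower; intros t Ht.
  - apply le_subX; intros z t' Ht' Hz; case_join Hz as w [Hxw Hwz]%le_meet.
    exact (ord_trans He _ _ _ (ord_trans He _ _ _ (wayb_le He Hwz) (wayb_le He Hxw))
             (le_trans Ht' Ht)).
  - apply (is_sup_least _ (is_sup_wayb x)); intros z t' Ht' Hxz.
    apply (is_sup_least _ (is_sup_wayb z)); intros w t'' Ht'' Hzw.
    apply (le_subX_elim w (le_trans Ht'' (le_trans Ht' Ht))).
    apply (le_join z), le_meet; split; [exact (le_trans Ht'' Hxz) | exact Hzw].
Qed.

Lemma wayb_interpolate {t x z} : t ⊑ wayb e x z -> t ⊑ wayb_wayb x z.
Proof.
  intro H; exact (wayb_elim _ _ H (wayb_wayb_ideal x) (is_sup_wayb_wayb x) (ord_refl He _ _)).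
Qed.

Lemma scott_open_upper {U t} x x' : scott_open e U -> t ⊑ U x -> t ⊑ e x x' -> t ⊑ U x'.
Proof.
  intros HU Hx Hxx'; rewrite HU in Hx |- *; case_join Hx as y [Hxy Hy]%le_meet.
  apply (le_join y), le_meet; split; [exact (wayb_trans_r He x' Hxy Hxx') | exact Hy].
Qed.

Lemma scott_open_le_wayb {U t} x y : scott_open e U -> t ⊑ U y -> t ⊑ wayb e x y -> t ⊑ U x.
Proof. intros HU Hy Hxy; exact (scott_open_upper y x HU Hy (wayb_le He Hxy)). Qed.

Lemma scott_open_meet U V : scott_open e U -> scott_open e V ->
  scott_open e (fun x => fmeet (U x) (V x)).
Proof.
  intros HU HV x; apply eq_by_lower; intros t Ht.
  - apply le_meet in Ht as [Hu Hv]; rewrite HU in Hu; rewrite HV in Hv.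
    case_join Hu as yu [Hxyu Hyu]%le_meet.
    case_join Hv as yv [Hxyv Hyv]%le_meet.
    assert (Huv := wayb_directed_at Hxyu Hxyv).
    case_join Huv as y [Hxy [Hyuy Hyvy]%le_meet]%le_meet.
    apply (le_join y), le_meet; split; [exact Hxy|].
    apply le_meet; split; [exact (scott_open_upper yu y HU Hyu Hyuy)
                          | exact (scott_open_upper yv y HV Hyv Hyvy)].
  - case_join Ht as y [Hxy [Hu Hv]%le_meet]%le_meet.
    apply le_meet; split; [exact (scott_open_le_wayb x y HU Hu Hxy)
                          | exact (scott_open_le_wayb x y HV Hv Hxy)].
Qed.

Lemma scott_open_join {I : Type} (V : I -> P -> L) : (forall i, scott_open e (V i)) ->
  scott_open e (fun x => bigjoin (fun i => V i x)).
Proof.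
  intros HV x; apply eq_by_lower; intros t Ht.
  - case_join Ht as i Hi; rewrite HV in Hi; case_join Hi as y [Hxy Hy]%le_meet.
    apply (le_join y), le_meet; split; [exact Hxy | exact (le_join i Hy)].
  - case_join Ht as y [Hxy Hy]%le_meet; case_join Hy as i Hi.
    exact (le_join i (scott_open_le_wayb x y (HV i) Hi Hxy)).
Qed.

Lemma scott_open_cst a : scott_open e (cst P a).
Proof.
  intro x; apply eq_by_lower; intros t Ht.
  - assert (Hx := le_join_wayb t x); case_join Hx as y Hxy.
    apply (le_join y), le_meet; split; assumption.
  - case_join Ht as y Hy; exact (proj2 (proj1 le_meet Hy)).
Qed.

Lemma scott_open_topology : is_topology (scott_open e).
Proof.
  split; [|split]; [exact scott_open_meet | exact @scott_open_join | exact scott_open_cst].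
Qed.

Lemma scott_open_way_above z : scott_open e (way_above e z).
Proof.
  intro x; apply eq_by_lower; intros t Ht.
  - exact (wayb_interpolate Ht).
  - case_join Ht as y [Hxy Hyz]%le_meet.
    exact (wayb_trans_r He x Hyz (wayb_le He Hxy)).
Qed.

Lemma specialization_scott : specialization (scott_open e) = e.
Proof.
  apply functional_extensionality; intro x; apply functional_extensionality; intro y.
  apply eq_by_lower; intros t Ht.
  - apply (is_sup_least _ (is_sup_wayb x)); intros z t' Ht' Hxz.
    exact (wayb_le He (open_upper (scott_open_way_above z) Hxz (le_trans Ht' Ht))).
  - apply le_specialization; intros U t' HU Ht' Hx.
    exact (scott_open_upper x y HU Hx (le_trans Ht' Ht)).
Qed.

Lemma subX_principal_up {V} y : scott_open e V -> subX (fun x => e y x) V = V y.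
Proof.
  intro HV; apply eq_by_lower; intros t Ht.
  - exact (le_subX_elim y Ht (ord_refl He _ _)).
  - apply le_subX; intros x t' Ht' Hyx; exact (scott_open_upper y x HV (le_trans Ht' Ht) Hyx).
Qed.

Lemma principal_up_super_compact y : super_compact (scott_open e) (fun x => e y x).
Proof.
  split.
  - apply top_le, (le_join y), ord_refl, He.
  - intros I V HV; rewrite (subX_principal_up y (scott_open_join V HV)).
    f_equal; apply functional_extensionality; intro i; symmetry; apply subX_principal_up, HV.
Qed.

Lemma scott_open_lsc : locally_super_compact (scott_open e).
Proof.
  intros U HU; apply functional_extensionality; intro x; apply eq_by_lower; intros t Ht.
  - rewrite HU in Ht; case_join Ht as y [Hxy Hy]%le_meet.
    apply (le_sup _ (ex_intro _ _ (conj (principal_up_super_compact y) eq_refl))).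
    rewrite subX_principal_up by exact HU; apply le_meet; split; [exact Hy|].
    assert (Hsub : leL (way_above e y) (fun z => e y z))
      by (intro z; apply le_by_lower; intros t' Ht'; exact (wayb_le He Ht')).
    exact (le_sup _ (ex_intro _ _ (conj (scott_open_way_above y) (conj Hsub eq_refl))) Hxy).
  - case_sup Ht as [B [_ ->]] [HBU HB]%le_meet.
    case_sup HB as [C [_ [HCB ->]]] HC.
    exact (le_subX_elim x HBU (le_trans HC (HCB x))).
Qed.

Lemma point_decompose {p U} : is_point (scott_open e) p -> scott_open e U ->
  p U = bigjoin (fun z => fmeet (p (way_above e z)) (U z)).
Proof.
  intros [Hmeet [Hjoin Hcst]] HU.
  assert (Hopen : forall z, scott_open e (fun x => fmeet (way_above e z x) (cst P (U z) x)))
    by (intro z; apply scott_open_meet; [apply scott_open_way_above | apply scott_open_cst]).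
  transitivity (p (fun x => bigjoin (fun z => fmeet (way_above e z x) (cst P (U z) x)))).
  - f_equal; apply functional_extensionality; intro x; exact (HU x).
  - rewrite (Hjoin _ _ Hopen); f_equal; apply functional_extensionality; intro z.
    rewrite Hmeet, Hcst; [reflexivity | apply scott_open_way_above | apply scott_open_cst].
Qed.

Lemma scott_open_T0 x y : (forall U, scott_open e U -> U x = U y) -> x = y.
Proof.
  intro H.
  assert (Hxy : wayb e x = wayb e y)
    by (apply functional_extensionality; intro z; exact (H _ (scott_open_way_above z))).
  apply (is_sup_unique He (is_sup_wayb x)); rewrite Hxy; apply is_sup_wayb.
Qed.

Lemma point_directed {p} : is_point (scott_open e) p ->
  directed e (fun z => p (way_above e z)).
Proof.
  intro Hp; pose proof Hp as [Hmeet [Hjoin Hcst]]; split.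
  - unfold nonemptyL; rewrite <- (Hjoin _ _ scott_open_way_above), <- (Hcst ftop).
    f_equal; apply functional_extensionality; intro x; apply top_le, le_join_wayb.
  - intros a b; rewrite <- Hmeet by apply scott_open_way_above.
    rewrite (point_decompose Hp (scott_open_meet _ _ (scott_open_way_above a)
                                                     (scott_open_way_above b))).
    apply le_by_lower; intros t Ht; case_join Ht as z [Hpz [Hza Hzb]%le_meet]%le_meet.
    apply (le_join z), le_meet; split; [exact Hpz|].
    apply le_meet; split; [exact (wayb_le He Hza) | exact (wayb_le He Hzb)].
Qed.

Hypothesis Hd : L_dcpo e.

Lemma scott_open_sober : L_sober (scott_open e).
Proof.
  split; [exact scott_open_T0|]; intros p Hp.
  destruct (Hd _ (point_directed Hp)) as [s Hs]; exists s; intros U HU.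
  rewrite (point_decompose Hp HU); apply eq_by_lower; intros t Ht.
  - case_join Ht as z [Hpz Hz]%le_meet.
    exact (scott_open_upper z s HU Hz (is_sup_ub He z Hs Hpz)).
  - rewrite HU in Ht; case_join Ht as y [Hsy Hy]%le_meet.
    assert (Hhull := wayb_directed_sup He (point_directed Hp) Hs Hsy (ord_refl He _ _)).
    case_join Hhull as z [Hpz Hyz]%le_meet.
    apply (le_join z), le_meet; split; [exact Hpz | exact (scott_open_upper y z HU Hy Hyz)].
Qed.

End ScottTopology.

Definition point_of {L : frame} {X : Type} (D : X -> L) (U : X -> L) : L :=
  bigjoin (fun z => fmeet (D z) (U z)).

Definition represented_by {L : frame} {X : Type} (O : (X -> L) -> Prop)
  (B : X -> L) (xB : X) : Prop :=
  forall U, O U -> subX B U = U xB.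

Section SoberSpace.
Context {L : frame} {X : Type} {O : (X -> L) -> Prop}.
Hypothesis Htop : is_topology O.
Hypothesis Hsob : L_sober O.
Implicit Types (t : L) (x y z s : X) (B D U : X -> L).
Local Notation E := (specialization O).

Lemma sober_specialization_Lorder : is_Lorder E.
Proof. exact (specialization_Lorder (proj1 Hsob)). Qed.

Lemma open_fsup {I : Type} (Q : I -> Prop) (F : I -> X -> L) : (forall i, Q i -> O (F i)) ->
  O (fun x => fsup (fun a => exists i, Q i /\ a = F i x)).
Proof.
  intro HF.
  replace (fun x => fsup (fun a => exists i, Q i /\ a = F i x))
    with (fun x => bigjoin (fun j : {i | Q i} => F (proj1_sig j) x))
    by (apply functional_extensionality; intro x; symmetry; exact (fsup_image Q (fun i => F i x))).
  apply (proj1 (proj2 Htop)); intro j; exact (HF _ (proj2_sig j)).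
Qed.

Lemma open_cst_meet U a : O U -> O (fun x => fmeet (U x) a).
Proof. intro HU; exact (proj1 Htop U (cst X a) HU (proj2 (proj2 Htop) a)). Qed.

Lemma point_of_is_point D : directed E D -> is_point O (point_of D).
Proof.
  intros [Hne Hdir]; split; [|split].
  - intros U V HU HV; apply eq_by_lower; intros t Ht.
    + case_join Ht as z [Dz [Uz Vz]%le_meet]%le_meet.
      apply le_meet; split; apply (le_join z), le_meet; split; assumption.
    + apply le_meet in Ht as [Hu Hv].
      case_join Hu as zu [Dzu Uzu]%le_meet.
      case_join Hv as zv [Dzv Vzv]%le_meet.
      assert (Huv := le_trans (proj2 le_meet (conj Dzu Dzv)) (Hdir zu zv)).
      case_join Huv as z [Dz [Hzuz Hzvz]%le_meet]%le_meet.
      apply (le_join z), le_meet; split; [exact Dz|].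
      apply le_meet; split; [exact (open_upper HU Uzu Hzuz) | exact (open_upper HV Vzv Hzvz)].
  - intros I V HV; apply eq_by_lower; intros t Ht.
    + case_join Ht as z [Dz Hz]%le_meet; case_join Hz as i Hi.
      apply (le_join i), (le_join z), le_meet; split; assumption.
    + case_join Ht as i Hi; case_join Hi as z [Dz Hz]%le_meet.
      apply (le_join z), le_meet; split; [exact Dz | exact (le_join i Hz)].
  - intro a; apply eq_by_lower; intros t Ht.
    + case_join Ht as z Hz; exact (proj2 (proj1 le_meet Hz)).
    + assert (HD := le_nonempty t Hne); case_join HD as z Dz.
      apply (le_join z), le_meet; split; assumption.
Qed.

Lemma directed_sup_point D : directed E D ->
  exists s, is_sup E D s /\ forall U, O U -> U s = point_of D U.
Proof.
  intro HD; destruct (proj2 Hsob _ (point_of_is_point D HD)) as [s Hs].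
  exists s; split; [|intros U HU; symmetry; exact (Hs U HU)].
  intro y; apply eq_by_lower; intros t Ht.
  - apply le_subX; intros z t' Ht' Dz; apply le_specialization; intros U t'' HU Ht'' Uz.
    assert (Us : t'' ⊑ U s).
    { rewrite <- (Hs U HU); apply (le_join z), le_meet.
      split; [exact (le_trans Ht'' Dz) | exact Uz]. }
    exact (open_upper HU Us (le_trans Ht'' (le_trans Ht' Ht))).
  - apply le_specialization; intros U t' HU Ht' Us; rewrite <- (Hs U HU) in Us.
    case_join Us as z [Dz Uz]%le_meet.
    exact (open_upper HU Uz (le_subX_elim z (le_trans Ht' Ht) Dz)).
Qed.

Lemma specialization_dcpo : L_dcpo E.
Proof. intros D HD; destruct (directed_sup_point D HD) as [s [Hs _]]; exists s; exact Hs. Qed.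

Lemma open_at_sup D s U : directed E D -> is_sup E D s -> O U -> U s = point_of D U.
Proof.
  intros HD Hs HU; destruct (directed_sup_point D HD) as [s' [Hs' Hpt]].
  rewrite (is_sup_unique sober_specialization_Lorder Hs Hs'); exact (Hpt U HU).
Qed.

(* [U |-> sub(B, U)] is a point of [O(X)] exactly because [B] is super-compact. *)
Lemma super_compact_represented B : super_compact O B -> exists xB, represented_by O B xB.
Proof.
  intros [Hne Hsc]; apply (proj2 Hsob (fun U => subX B U)); split; [|split].
  - intros U V _ _; apply eq_by_lower; intros t Ht.
    + apply le_meet; split; apply le_subX; intros x t' Ht' Bx;
        apply (le_subX_elim x (le_trans Ht' Ht)), le_meet in Bx as [Ux Vx]; assumption.
    + apply le_meet in Ht as [HU HV]; apply le_subX; intros x t' Ht' Bx.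
      apply le_meet; split; [exact (le_subX_elim x (le_trans Ht' HU) Bx)
                            | exact (le_subX_elim x (le_trans Ht' HV) Bx)].
  - exact Hsc.
  - intro a; apply eq_by_lower; intros t Ht.
    + assert (HB := le_nonempty t Hne); case_join HB as x Bx; exact (le_subX_elim x Ht Bx).
    + apply le_subX; intros x t' Ht' _; exact (le_trans Ht' Ht).
Qed.

Lemma represented_le_specialization {B xB t} z : represented_by O B xB ->
  t ⊑ B z -> t ⊑ E xB z.
Proof.
  intros Hrep Bz; apply le_specialization; intros U t' HU Ht' UxB; rewrite <- (Hrep U HU) in UxB.
  exact (le_subX_elim z UxB (le_trans Ht' Bz)).
Qed.

Lemma interior_open B : O (interior O B).
Proof.
  replace (interior O B) with (fun x => fsup (fun a => exists C, (O C /\ leL C B) /\ a = C x)).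
  - apply open_fsup; intros C [HC _]; exact HC.
  - apply functional_extensionality; intro x; unfold interior; f_equal.
    apply functional_extensionality; intro a; apply propositional_extensionality.
    split; [intros [C [[HC HCB] ->]] | intros [C [HC [HCB ->]]]]; eauto.
Qed.

Lemma interior_le_wayb {B xB t} x : represented_by O B xB ->
  t ⊑ interior O B x -> t ⊑ wayb E x xB.
Proof.
  intros Hrep Hx; apply le_wayb; intros I s t' HI Hs Ht' Hxs; restrict Ht'.
  case_sup Hx as [C [HC [HCB ->]]] Cx.
  assert (Cs := open_upper HC Cx Hxs); rewrite (open_at_sup I s C (proj1 HI) Hs HC) in Cs.
  case_join Cs as z [Iz Cz]%le_meet.
  apply (lower_set_elim z xB (proj2 HI) Iz).
  exact (represented_le_specialization z Hrep (le_trans Cz (HCB z))).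
Qed.

End SoberSpace.

Section LocallySuperCompactSober.
Context {L : frame} {X : Type} {O : (X -> L) -> Prop}.
Hypothesis Htop : is_topology O.
Hypothesis Hsob : L_sober O.
Hypothesis Hlsc : locally_super_compact O.
Implicit Types (t : L) (x y z : X) (B U : X -> L).
Local Notation E := (specialization O).
Let HE : is_Lorder E := sober_specialization_Lorder Hsob.

Lemma lsc_at {U} x : O U ->
  U x = fsup (fun a => exists B, super_compact O B /\ a = fmeet (subX B U) (interior O B x)).
Proof. intro HU; exact (f_equal (fun V => V x) (Hlsc U HU)). Qed.

Definition represented_super_compact (q : (X -> L) * X) : Prop :=
  super_compact O (fst q) /\ represented_by O (fst q) (snd q).

Definition sc_approx x y : L :=
  fsup (fun a => exists q, represented_super_compact q /\
                           a = fmeet (interior O (fst q) x) (E y (snd q))).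

Lemma le_sc_approx {t x y} B xB : super_compact O B -> represented_by O B xB ->
  t ⊑ interior O B x -> t ⊑ E y xB -> t ⊑ sc_approx x y.
Proof.
  intros HB Hrep Hx Hy; apply (le_sup _ (ex_intro _ (B, xB) (conj (conj HB Hrep) eq_refl))).
  apply le_meet; split; assumption.
Qed.

Lemma le_sc_approx_elim {t d x y} : t ⊑ sc_approx x y ->
  (forall B xB, super_compact O B -> represented_by O B xB ->
     forall t', t' ⊑ t -> t' ⊑ interior O B x -> t' ⊑ E y xB -> t' ⊑ d) -> t ⊑ d.
Proof.
  intros H K; apply (le_sup_elim H); intros s [[B xB] [[HB Hrep] ->]] t' Ht' [HBx HyxB]%le_meet.
  exact (K B xB HB Hrep t' Ht' HBx HyxB).
Qed.

Lemma le_open_elim {U t d} x : O U -> t ⊑ U x ->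
  (forall B xB, super_compact O B -> represented_by O B xB ->
     forall t', t' ⊑ t -> t' ⊑ U xB -> t' ⊑ interior O B x -> t' ⊑ d) -> t ⊑ d.
Proof.
  intros HU Hx K; rewrite (lsc_at x HU) in Hx; apply (le_sup_elim Hx).
  intros s [B [HB ->]] t' Ht' [HBU HBx]%le_meet.
  destruct (super_compact_represented Hsob B HB) as [xB Hrep]; rewrite (Hrep U HU) in HBU.
  exact (K B xB HB Hrep t' Ht' HBU HBx).
Qed.

Lemma sc_approx_directed x : directed E (sc_approx x).
Proof.
  split.
  - apply top_le; apply (le_open_elim x (proj2 (proj2 Htop) ftop) (le_top ftop)).
    intros B xB HB Hrep t _ _ HBx.
    exact (le_join xB (le_sc_approx B xB HB Hrep HBx (ord_refl HE _ _))).
  - intros a b; apply le_by_lower; intros t [Ha Hb]%le_meet.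
    apply (le_sc_approx_elim Ha); intros B1 x1 _ Hrep1 t1 Ht1 HB1x Hax1; restrict Ht1.
    apply (le_sc_approx_elim Hb); intros B2 x2 _ Hrep2 t2 Ht2 HB2x Hbx2; restrict Ht2.
    set (C := fun z => fmeet (interior O B1 z) (interior O B2 z)).
    assert (HC : O C) by (apply (proj1 Htop); apply interior_open; exact Htop).
    apply (le_open_elim x HC (proj2 le_meet (conj HB1x HB2x))).
    intros B3 x3 HB3 Hrep3 t' Ht' [HB1x3 HB2x3]%le_meet HB3x; restrict Ht'.
    apply (le_join x3), le_meet; split.
    { exact (le_sc_approx B3 x3 HB3 Hrep3 HB3x (ord_refl HE _ _)). }
    apply le_meet; split.
    + exact (ord_trans HE _ _ _ Hax1 (wayb_le HE (interior_le_wayb Hsob x3 Hrep1 HB1x3))).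
    + exact (ord_trans HE _ _ _ Hbx2 (wayb_le HE (interior_le_wayb Hsob x3 Hrep2 HB2x3))).
Qed.

Lemma sc_approx_lower x : lower_set E (sc_approx x).
Proof.
  intros y z; apply le_by_lower; intros t [Hy Hzy]%le_meet.
  apply (le_sc_approx_elim Hy); intros B xB HB Hrep t' Ht' HBx HyxB; restrict Ht'.
  exact (le_sc_approx B xB HB Hrep HBx
           (ord_trans HE _ _ _ Hzy HyxB)).
Qed.

Lemma is_sup_sc_approx x : is_sup E (sc_approx x) x.
Proof.
  intro y; apply eq_by_lower; intros t Ht.
  - apply le_subX; intros z t' Ht' Hz.
    apply (le_sc_approx_elim Hz); intros B xB _ Hrep t'' Ht'' HBx HzxB; restrict Ht''.
    assert (HxBx := wayb_le HE (interior_le_wayb Hsob x Hrep HBx)).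
    exact (ord_trans HE _ _ _ HzxB (ord_trans HE _ _ _ HxBx (le_trans Ht' Ht))).
  - apply le_specialization; intros U t' HU Ht' Ux.
    apply (le_open_elim x HU Ux); intros B xB HB Hrep t'' Ht'' UxB HBx.
    assert (HxBy := le_subX_elim xB (le_trans Ht'' (le_trans Ht' Ht))
                      (le_sc_approx B xB HB Hrep HBx (ord_refl HE _ _))).
    exact (open_upper HU UxB HxBy).
Qed.

Lemma wayb_specialization x : wayb E x = sc_approx x.
Proof.
  apply functional_extensionality; intro y; apply eq_by_lower; intros t Ht.
  - exact (wayb_elim _ _ Ht (conj (sc_approx_directed x) (sc_approx_lower x))
             (is_sup_sc_approx x) (ord_refl HE _ _)).
  - apply (le_sc_approx_elim Ht); intros B xB _ Hrep t' _ HBx HyxB.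
    exact (wayb_trans_l y (interior_le_wayb Hsob x Hrep HBx) HyxB).
Qed.

Lemma specialization_continuous : continuous_Lordered E.
Proof.
  intro x; rewrite wayb_specialization.
  exact (conj (sc_approx_directed x) (is_sup_sc_approx x)).
Qed.

Lemma sc_approx_open y : O (fun x => sc_approx x y).
Proof.
  apply (open_fsup Htop _ (fun q x => fmeet (interior O (fst q) x) (E y (snd q)))).
  intros q _; apply (open_cst_meet Htop), interior_open, Htop.
Qed.

Lemma scott_open_specialization : scott_open E = O.
Proof.
  apply functional_extensionality; intro U; apply propositional_extensionality; split.
  - intro HU.
    replace U with (fun x => bigjoin (fun y => fmeet (sc_approx x y) (U y)))
      by (apply functional_extensionality; intro x; rewrite (HU x), wayb_specialization;
          reflexivity).
    apply (proj1 (proj2 Htop)); intro y; apply (open_cst_meet Htop), sc_approx_open.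
  - intros HU x; apply eq_by_lower; intros t Ht.
    + apply (le_open_elim x HU Ht); intros B xB _ Hrep t' _ UxB HBx.
      apply (le_join xB), le_meet; split; [exact (interior_le_wayb Hsob x Hrep HBx) | exact UxB].
    + case_join Ht as y [Hxy Uy]%le_meet.
      exact (open_upper HU Uy (wayb_le HE Hxy)).
Qed.

End LocallySuperCompactSober.

Section Morphisms.
Context {L : frame}.

Lemma continuous_specialization_monotone {X Y : Type} {OX : (X -> L) -> Prop}
  {OY : (Y -> L) -> Prop} {f : X -> Y} : Lcontinuous OX OY f ->
  forall t x x', t ⊑ specialization OX x x' -> t ⊑ specialization OY (f x) (f x').
Proof.
  intros Hf t x x' Hxx'; apply le_specialization; intros V t' HV Ht' Vfx.
  exact (open_upper (Hf V HV) Vfx (le_trans Ht' Hxx')).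
Qed.

Lemma continuous_scott_continuous {X Y : Type} {OX : (X -> L) -> Prop} {OY : (Y -> L) -> Prop}
  (HsX : L_sober OX) (HsY : L_sober OY) (f : X -> Y) :
  Lcontinuous OX OY f -> Scott_continuous (specialization OX) (specialization OY) f.
Proof.
  intros Hf D HD s Hs y; apply eq_by_lower; intros t Ht.
  - apply le_subX; intros z t' Ht' Hz; case_sup Hz as [x [<- ->]] Dx.
    apply (ord_trans (sober_specialization_Lorder HsY) _ (f s)); [|exact (le_trans Ht' Ht)].
    exact (continuous_specialization_monotone Hf _ x s
             (is_sup_ub (sober_specialization_Lorder HsX) x Hs Dx)).
  - apply le_specialization; intros V t' HV Ht' Vfs; restrict Ht'.
    rewrite (open_at_sup HsX D s _ HD Hs (Hf V HV)) in Vfs.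
    case_join Vfs as x [Dx Vfx]%le_meet.
    exact (open_upper HV Vfx (le_subX_elim (f x) Ht (le_fimage x Dx))).
Qed.

Lemma scott_continuous_continuous {P Q : Type} {eP : P -> P -> L} {eQ : Q -> Q -> L}
  (HP : is_Lorder eP) (HQ : is_Lorder eQ) (HcP : continuous_Lordered eP) (g : P -> Q) :
  Scott_continuous eP eQ g -> Lcontinuous (scott_open eP) (scott_open eQ) g.
Proof.
  intros Hg U HU x; pose proof (scott_continuous_monotone HP HQ Hg) as Hmono.
  apply eq_by_lower; intros t Ht.
  - rewrite (HU (g x)) in Ht; case_join Ht as y [Hgxy Uy]%le_meet.
    pose proof (fimage_directed Hmono (proj1 (HcP x))) as HD.
    assert (Hhull := wayb_directed_sup HQ HD (Hg _ (proj1 (HcP x)) x (proj2 (HcP x)))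
                       Hgxy (ord_refl HQ _ _)).
    case_join Hhull as z [Hz Hyz]%le_meet.
    case_sup Hz as [x' [<- ->]] Hxx'.
    apply (le_join x'), le_meet; split; [exact Hxx'|].
    exact (scott_open_upper HQ y (g x') HU Uy Hyz).
  - case_join Ht as y [Hxy Ugy]%le_meet.
    exact (scott_open_upper HQ (g y) (g x) HU Ugy (Hmono _ _ _ (wayb_le HP Hxy))).
Qed.

End Morphisms.

Definition sob_to_cdom {L : frame} (A : LSCSob L) : CDom L :=
  MkCDom L (sob_car A) (specialization (sob_O A))
    (sober_specialization_Lorder (sob_sober L A)) (specialization_dcpo (sob_sober L A))
    (specialization_continuous (sob_top L A) (sob_sober L A) (sob_lsc L A)).

Definition cdom_to_sob {L : frame} (B : CDom L) : LSCSob L :=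
  MkLSCSob L (cd_car B) (scott_open (cd_e B))
    (scott_open_topology (cd_ord L B) (cd_cont L B)) (scott_open_lsc (cd_ord L B) (cd_cont L B))
    (scott_open_sober (cd_ord L B) (cd_cont L B) (cd_dcpo L B)).

Definition sob_to_cdom_hom {L : frame} (A B : LSCSob L) (f : LSCSob_hom A B) :
  CDom_hom (sob_to_cdom A) (sob_to_cdom B) :=
  MkCDomHom L (sob_to_cdom A) (sob_to_cdom B) (sob_fun f)
    (continuous_scott_continuous (sob_sober L A) (sob_sober L B) _ (sob_fun_cont A B f)).

Definition cdom_to_sob_hom {L : frame} (A B : CDom L) (g : CDom_hom A B) :
  LSCSob_hom (cdom_to_sob A) (cdom_to_sob B) :=
  MkLSCSobHom L (cdom_to_sob A) (cdom_to_sob B) (cd_fun g)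
    (scott_continuous_continuous (cd_ord L A) (cd_ord L B) (cd_cont L A) _ (cd_fun_scott A B g)).

Lemma LSCSob_ext {L : frame} X O1 O2 p1 p2 p3 q1 q2 q3 : O1 = O2 ->
  MkLSCSob L X O1 p1 p2 p3 = MkLSCSob L X O2 q1 q2 q3.
Proof. intros <-; f_equal; apply proof_irrelevance. Qed.

Lemma CDom_ext {L : frame} X e1 e2 p1 p2 p3 q1 q2 q3 : e1 = e2 ->
  MkCDom L X e1 p1 p2 p3 = MkCDom L X e2 q1 q2 q3.
Proof. intros <-; f_equal; apply proof_irrelevance. Qed.

Lemma sob_to_cdomK {L : frame} (A : LSCSob L) : cdom_to_sob (sob_to_cdom A) = A.
Proof.
  destruct A as [X O Htop Hlsc Hsob]; apply LSCSob_ext, scott_open_specialization; assumption.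
Qed.

Lemma cdom_to_sobK {L : frame} (B : CDom L) : sob_to_cdom (cdom_to_sob B) = B.
Proof. destruct B as [P e He Hd Hc]; apply CDom_ext, specialization_scott; assumption. Qed.

Lemma LSCSob_hom_JMeq {L : frame} {A B A' B' : LSCSob L} (h : LSCSob_hom A' B')
  (f : LSCSob_hom A B) : A' = A -> B' = B -> JMeq (sob_fun h) (sob_fun f) -> JMeq h f.
Proof.
  intros <- <- Hhf; apply JMeq_eq in Hhf; destruct h as [h ph], f as [f pf]; simpl in Hhf.
  subst; rewrite (proof_irrelevance _ ph pf); apply JMeq_refl.
Qed.

Lemma CDom_hom_JMeq {L : frame} {A B A' B' : CDom L} (h : CDom_hom A' B')
  (f : CDom_hom A B) : A' = A -> B' = B -> JMeq (cd_fun h) (cd_fun f) -> JMeq h f.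
Proof.
  intros <- <- Hhf; apply JMeq_eq in Hhf; destruct h as [h ph], f as [f pf]; simpl in Hhf.
  subst; rewrite (proof_irrelevance _ ph pf); apply JMeq_refl.
Qed.

Theorem theorem4p8 (L : frame) : categories_isomorphic L.
Proof.
  exists (@sob_to_cdom L), (@sob_to_cdom_hom L), (@cdom_to_sob L), (@cdom_to_sob_hom L).
  split; [|split; [|split; [|split; [|split]]]].
  - split; intros; simpl; auto.
  - split; intros; simpl; auto.
  - exact sob_to_cdomK.
  - exact cdom_to_sobK.
  - intros A B f; apply LSCSob_hom_JMeq; [apply sob_to_cdomK .. | apply JMeq_refl].
  - intros A B g; apply CDom_hom_JMeq; [apply cdom_to_sobK .. | apply JMeq_refl].
Qed.
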